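(* The deterministic query complexity of Local Search on the Odd graph satisfies $$D[LS(K(2k+1,k))]\in\Omega\!\left(\frac{1}{k}\binom{2k+1}{k}\right)\quad\text{as } k\to\infty.$$
   Context: The Kneser graph $K(n,k)$ has as vertices the $k$-element subsets of $[n]$, with two vertices adjacent if and only if they are disjoint. Local Search on a finite undirected graph $G=(V,E)$ is as follows. An unknown function $f:V\to\mathbb{R}$ is accessed only through queries: querying $a\in V$ returns $f(a)$, and queries may be adaptive. The algorithm must output a local maximum, i.e. a vertex $a$ with $f(a)\ge f(b)$ for every edge $(a,b)\in E$. $D[LS(G)]$ is the minimum, over deterministic algorithms, of the maximum, over all $f$, of the number of queries used. *)

From HB Require Import structures.
From mathcomp Require Import all_boot all_order all_algebra.
Set Implicit Arguments. Unset Strict Implicit. Unset Printing Implicit Defensive.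
Import Order.TTheory GRing.Theory Num.Theory.
Local Open Scope ring_scope.

Definition kneser_vertex (n k : nat) : finType := {A : {set 'I_n} | #|A| == k}.

Definition kneser_adj (n k : nat) : rel (kneser_vertex n k) :=
  fun A B => [disjoint val A & val B].

Definition local_max (V : finType) (e : rel V) (R : realFieldType)
  (f : V -> R) (a : V) : Prop :=
  forall b : V, e a b -> f b <= f a.

(** A deterministic adaptive query algorithm: given the history of
    (query, answer) pairs so far, it either queries a new vertex (inl)
    or stops and outputs a vertex (inr). *)
Definition algorithm (V : finType) (R : realFieldType) : Type :=
  seq (V * R) -> V + V.

Fixpoint run (V : finType) (R : realFieldType) (A : algorithm V R)
  (f : V -> R) (t : nat) (h : seq (V * R)) : option V :=
  match A h with
  | inr v => Some v
  | inl u => if t is t'.+1 then run A f t' (rcons h (u, f u)) else None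
  end.

Definition solves_within (V : finType) (e : rel V) (R : realFieldType)
  (A : algorithm V R) (t : nat) : Prop :=
  forall f : V -> R, exists2 v, run A f t [::] = Some v & local_max e f v.

Definition D_LS_ge (V : finType) (e : rel V) (R : realFieldType) (d : rat) : Prop :=
  forall (A : algorithm V R) (t : nat), solves_within e A t -> d <= t%:R.

From HB Require Import structures.
From mathcomp Require Import all_boot all_order all_algebra.
From mathcomp Require Import all_fingroup zify.
Import Order.TTheory GRing.Theory Num.Theory.
Set Implicit Arguments. Unset Strict Implicit. Unset Printing Implicit Defensive.

(* An adversary answers the queries with a potential.  After each query it
   looks at the giant component of the unqueried vertices, the one holding
   more than half of the graph.  A vertex is valued by the query that cut it
   off from the giant component, its value increasing towards that query;
   vertices still in the giant component get the top value.  Each answer is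
   final when given, and every local maximum of the resulting function lies
   in the final giant component, which the algorithm has not queried: lowering
   the value at its output keeps all answers and makes the output wrong.
   In the Odd graph fewer than |V|/(16k) queries cannot destroy the giant
   component: a set Q without giant component separates about |V|^2/2 pairs,
   whereas, averaging over all relabellings of [2k+1], the canonical paths of
   length at most 2k meet Q in only (2k+1)|Q|/|V| vertices on average. *)

Section Components.
Variables (V : finType) (e : rel V).
Hypothesis e_sym : symmetric e.
Implicit Types (Q X Y : {set V}) (u v w x y z : V).

(* Iterating [bfs_step Q w] from [set0] grows the balls around [w] in the
   subgraph induced on [~: Q]. *)
Definition bfs_step Q w X : {set V} :=
  (w |: [set y | [exists x in X, e x y]]) :\: Q.

Lemma bfs_step_homo Q w : {homo bfs_step Q w : X Y / X \subset Y}.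
Proof.
move=> X Y sXY; apply/subsetP=> y; rewrite !inE => /andP[-> /orP[->//|]] /=.
case/existsP=> x /andP[xX exy]; apply/orP; right; apply/existsP; exists x.
by rewrite exy (subsetP sXY).
Qed.

Definition component Q w := fixset (bfs_step Q w).

(* [1 +] the distance from [w] in [~: Q], and [0] outside [component Q w]. *)
Definition bfs_rank Q w := fix_order (bfs_step Q w).

Lemma component_fixed Q w : bfs_step Q w (component Q w) = component Q w.
Proof. exact: fixsetK (bfs_step_homo Q w). Qed.

Lemma component_notin Q w x : x \in component Q w -> x \notin Q.
Proof. by rewrite -component_fixed !inE => /andP[]. Qed.

Lemma mem_component Q w : w \notin Q -> w \in component Q w.
Proof. by move=> wQ; rewrite -component_fixed !inE wQ eqxx. Qed.

Lemma component_edge Q w x y :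
  x \in component Q w -> y \notin Q -> e x y -> y \in component Q w.
Proof.
move=> xw yQ exy; rewrite -component_fixed !inE yQ /=; apply/orP; right.
by apply/existsP; exists x; rewrite xw exy.
Qed.

Lemma component_min Q w X : bfs_step Q w X \subset X -> component Q w \subset X.
Proof.
move=> sX; rewrite /component /fixset; elim: #|V| => [|i IH] /=.
  exact: sub0set.
exact: subset_trans (bfs_step_homo Q w IH) sX.
Qed.

Lemma component_trans Q x y z :
  y \in component Q x -> z \in component Q y -> z \in component Q x.
Proof.
move=> yx; apply/subsetP; apply: component_min; apply/subsetP=> u.
rewrite !inE => /andP[uQ /orP[/eqP->//|/existsP[v /andP[vx evu]]]].
exact: component_edge vx uQ evu.
Qed.

Lemma component_sym Q x y : y \in component Q x -> x \in component Q y.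
Proof.
move=> yx; have := yx; rewrite {1}/component /fixset.
elim: #|V| y yx => [|i IH] y yx /=; first by rewrite inE.
rewrite !inE => /andP[yQ /orP[/eqP<-|/existsP[z /andP[zi ezy]]]].
  exact: mem_component.
have zx : z \in component Q x.
  exact: subsetP (iter_sub_fix (bfs_step_homo Q x) i) z zi.
apply: component_trans (IH z zx zi).
by apply: component_edge (mem_component yQ) (component_notin zx) _; rewrite e_sym.
Qed.

Lemma componentS Q Q' x : Q \subset Q' -> component Q' x \subset component Q x.
Proof.
move=> sQQ'; apply: component_min; apply/subsetP=> u.
rewrite !inE => /andP[uQ'].
have uQ : u \notin Q by apply: contra uQ'; apply: subsetP.
case/orP=> [/eqP ux|/existsP[v /andP[vx evu]]].
  by rewrite ux mem_component // -ux.
exact: component_edge vx uQ evu.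
Qed.

Lemma component_path Q x p : path e x p -> all [predC Q] (x :: p) ->
  last x p \in component Q x.
Proof.
elim: p x => [|y p IH] x /=; first by rewrite andbT => xQ; apply: mem_component.
case/andP=> exy xp /and3P[xQ yQ yp].
apply: component_trans (component_edge (mem_component xQ) yQ exy) _.
by apply: IH => //=; rewrite yQ.
Qed.

Lemma component_eq Q x y : y \in component Q x -> component Q y = component Q x.
Proof.
move=> yx; apply/setP=> z; apply/idP/idP; first exact: component_trans.
exact: component_trans (component_sym yx).
Qed.

Lemma bfs_rank_gt0 Q w x : (0 < bfs_rank Q w x) = (x \in component Q w).
Proof. exact: fix_order_gt0. Qed.

Lemma bfs_rank_le Q w x : bfs_rank Q w x <= #|V|.
Proof. exact: fix_order_le_max. Qed.

Lemma mem_bfs_ball Q w x i : (x \in iter i (bfs_step Q w) set0) = (0 < bfs_rank Q w x <= i).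
Proof. exact: (in_iter_fixE (bfs_step_homo Q w)). Qed.

Lemma bfs_rank1 Q w x : bfs_rank Q w x = 1 -> x = w.
Proof.
move=> r1; have : x \in iter 1 (bfs_step Q w) set0 by rewrite mem_bfs_ball r1.
by rewrite /= !inE => /andP[_ /orP[/eqP//|/existsP[z]]]; rewrite inE.
Qed.

Lemma bfs_rank_pred Q w x m : bfs_rank Q w x = m.+2 ->
  exists2 z, e z x & 0 < bfs_rank Q w z <= m.+1.
Proof.
move=> rx; have : x \in iter m.+2 (bfs_step Q w) set0 by rewrite mem_bfs_ball rx leqnn.
rewrite iterS !inE => /andP[xQ /orP[/eqP xw|/existsP[z /andP[zm ezx]]]].
  have : x \in iter 1 (bfs_step Q w) set0 by rewrite /= !inE xw eqxx -xw xQ.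
  by rewrite mem_bfs_ball rx.
by exists z; rewrite -?mem_bfs_ball.
Qed.

Lemma component_setU1_nb Q w y : w \notin Q -> y \in component Q w -> y != w ->
  exists2 u, e w u & u \in component (w |: Q) y.
Proof.
move=> wQ; have [m] := ubnP (bfs_rank Q w y).
elim: m y => // m IH y ltym yw nyw.
have yQ' : y \notin w |: Q by rewrite !inE negb_or nyw (component_notin yw).
move: (yw); rewrite -bfs_rank_gt0.
case ry: (bfs_rank Q w y) ltym => [//|[|r]] ltym _.
  by rewrite (bfs_rank1 ry) eqxx in nyw.
have [z ezy /andP[z0 rz]] := bfs_rank_pred ry.
have [zw|nzw] := eqVneq z w.
  by exists y; [rewrite -zw | apply: mem_component].
have zw : z \in component Q w by rewrite -bfs_rank_gt0.
have [|u ewu uz] := IH z _ zw nzw; first by rewrite (leq_ltn_trans rz).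
exists u => //; apply: component_trans uz.
apply: component_edge (mem_component yQ') _ _; last by rewrite e_sym.
by rewrite !inE negb_or nzw (component_notin zw).
Qed.

Definition giant Q := [set x | (x \notin Q) && (#|V| < 2 * #|component Q x|)].

Lemma giant_notin Q x : x \in giant Q -> x \notin Q.
Proof. by rewrite inE => /andP[]. Qed.

Lemma giantS Q Q' : Q \subset Q' -> giant Q' \subset giant Q.
Proof.
move=> sQQ'; apply/subsetP=> x; rewrite !inE => /andP[xQ' big].
rewrite (contra (subsetP sQQ' x) xQ') /=; apply: leq_trans big _.
by rewrite leq_mul2l subset_leq_card ?componentS ?orbT.
Qed.

Lemma giant_connected Q x y : x \in giant Q -> y \in giant Q -> y \in component Q x.
Proof.
rewrite !inE => /andP[_ bigx] /andP[_ bigy].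
have : 0 < #|component Q x :&: component Q y|.
  have := cardsUI (component Q x) (component Q y).
  have := max_card (component Q x :|: component Q y); lia.
case/card_gt0P => z; rewrite inE => /andP[zx zy].
exact: component_trans zx (component_sym zy).
Qed.

Lemma giant_component Q x y : x \in giant Q -> y \in component Q x -> y \in giant Q.
Proof.
by rewrite !inE => /andP[_ big] yx; rewrite (component_eq yx) big (component_notin yx).
Qed.

Lemma giant_setU1 Q x w : x \in giant Q -> w \notin giant Q -> x \in giant (w |: Q).
Proof.
move=> xQ wQ; have wx : w \notin component Q x.
  by apply: contra wQ; apply: giant_component.
have sub : component Q x \subset component (w |: Q) x.
  apply: component_min; apply/subsetP=> u.
  rewrite !inE => /andP[uQ /orP[/eqP->|/existsP[v /andP[vx evu]]]].
    rewrite mem_component // !inE negb_or (giant_notin xQ) andbT.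
    by apply: contraNneq wx => <-; rewrite mem_component ?(giant_notin xQ).
  have vx' : v \in component Q x by apply: subsetP (componentS _ (subsetUr _ _)) v vx.
  have nuw : u != w.
    by apply: contraNneq wx => uw; rewrite -uw (component_edge vx' uQ evu).
  by apply: component_edge vx _ evu; rewrite !inE negb_or nuw.
move: xQ; rewrite !inE => /andP[xQ big].
rewrite negb_or xQ andbT; apply/andP; split.
  by apply: contraNneq wx => <-; rewrite mem_component.
by apply: leq_trans big _; rewrite leq_mul2l subset_leq_card ?orbT.
Qed.

Lemma giant_setU1_nb Q w c : w \in giant Q -> c \in giant (w |: Q) ->
  exists2 u, e w u & u \in giant (w |: Q).
Proof.
move=> wQ cQ'; have cQ : c \in giant Q by apply: subsetP (giantS (subsetUr _ _)) c cQ'.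
have ncw : c != w by apply: contraTneq (giant_notin cQ') => ->; rewrite setU11.
have [u ewu uc] := component_setU1_nb (giant_notin wQ) (giant_connected wQ cQ) ncw.
by exists u => //; apply: giant_component uc.
Qed.

Lemma sum_mem_card (A : {set V}) : \sum_x (x \in A) = #|A|.
Proof. by rewrite -sum1_card [RHS]big_mkcond; apply: eq_bigr => x _; case: (x \in A). Qed.

Definition separated Q x y := [&& x \notin Q, y \notin Q & y \notin component Q x].

Definition separated_pairs Q := \sum_x \sum_y separated Q x y.

Lemma card_separated Q x : x \notin Q ->
  \sum_y separated Q x y = #|V| - #|Q| - #|component Q x|.
Proof.
move=> xQ; have -> : \sum_y separated Q x y = #|~: (Q :|: component Q x)|.
  by rewrite -[RHS]sum_mem_card; apply: eq_bigr => y _; rewrite /separated xQ !inE negb_or.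
have QC0 : Q :&: component Q x = set0.
  by apply/setP=> y; rewrite !inE; apply/andP=> -[yQ /component_notin]; rewrite yQ.
by rewrite cardsCs setCK cardsU QC0 cards0 subn0 subnDA.
Qed.

Lemma separated_pairs_lb Q : giant Q = set0 ->
  (#|V| - #|Q|) * (#|V| - 2 * #|Q|) <= 2 * separated_pairs Q.
Proof.
move=> noGiant; have -> : #|V| - #|Q| = \sum_x (x \notin Q).
  rewrite [RHS](eq_bigr (fun x => nat_of_bool (x \in ~: Q))) => [|x _]; last by rewrite inE.
  by rewrite sum_mem_card [#|~: Q|]cardsCs setCK.
rewrite big_distrl /separated_pairs big_distrr; apply: leq_sum => x _ /=.
case: (boolP (x \in Q)) => [//|xQ]; rewrite card_separated // mul1n.
have : x \notin giant Q by rewrite noGiant inE.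
rewrite inE xQ -leqNgt /=; lia.
Qed.
End Components.

Section Potential.
Variables (V : finType) (e : rel V).
Hypothesis e_sym : symmetric e.
Implicit Types (s : seq V) (a b c u v w : V).
Local Notation giant := (giant e).
Local Notation bfs_rank := (bfs_rank e).

Definition giant_after s i := giant [set:: take i s].

(* [(size s).+1] if [v] stays in the giant component throughout. *)
Definition exit_time s v := find (fun i => v \notin giant_after s i) (iota 0 (size s).+1).

(* A vertex leaving the giant component at the [l]-th query gets a value
   strictly between [(l-1)M] and [lM], [M = #|V|.+1], which increases along
   shortest paths towards the [l]-th queried vertex; vertices never leaving
   it get the largest value. *)
Definition potential s v : nat :=
  let l := exit_time s v in
  if size s < l then (size s).+1 * #|V|.+1
  else l * #|V|.+1 - bfs_rank [set:: take l.-1 s] (nth v s l.-1) v.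

Lemma giant_after_homo s i j : i <= j -> giant_after s j \subset giant_after s i.
Proof.
move=> ij; apply: giantS; apply/subsetP=> x; rewrite !inE -(take_takel s ij).
exact: mem_take.
Qed.

Lemma mem_giant_after s v i : i <= size s -> (v \in giant_after s i) = (i < exit_time s v).
Proof.
move=> iS; case: ltnP => lt_i.
  by have := before_find 0 lt_i; rewrite nth_iota ?ltnS // add0n => /negbFE.
have fS : exit_time s v < size (iota 0 (size s).+1).
  by rewrite size_iota ltnS (leq_trans lt_i).
have hv : has (fun i => v \notin giant_after s i) (iota 0 (size s).+1) by rewrite has_find.
have := nth_find 0 hv; rewrite -/(exit_time s v) nth_iota; last first.
  by rewrite -(size_iota 0 (size s).+1).
by rewrite add0n => vexit; apply/negbTE; apply: contra vexit; apply/subsetP/giant_after_homo.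
Qed.

Lemma exit_time_eq s v l : l <= size s -> v \notin giant_after s l ->
  (forall i, i < l -> v \in giant_after s i) -> exit_time s v = l.
Proof.
move=> lS vl before; case: (ltngtP (exit_time s v) l) => // lt_l.
  by move: (before _ lt_l); rewrite mem_giant_after ?ltnn // (leq_trans (ltnW lt_l)).
by move: vl; rewrite mem_giant_after // lt_l.
Qed.

Lemma giant_after_take s i j : i <= j -> giant_after (take j s) i = giant_after s i.
Proof. by move=> ij; rewrite /giant_after take_takel. Qed.

Lemma potential_take s j v : j <= size s -> v \notin giant_after s j ->
  potential (take j s) v = potential s v.
Proof.
move=> jS vj; have lj : exit_time s v <= j by move: vj; rewrite mem_giant_after // -leqNgt.
have sz : size (take j s) = j by rewrite size_takel.
have exitE : exit_time (take j s) v = exit_time s v.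
  apply: exit_time_eq; first by rewrite sz.
    by rewrite giant_after_take // mem_giant_after ?ltnn // (leq_trans lj).
  move=> i il; rewrite giant_after_take ?(leq_trans (ltnW il)) //.
  by rewrite mem_giant_after // (leq_trans (ltnW il)) // (leq_trans lj).
rewrite /potential exitE sz ltnNge lj /= ltnNge (leq_trans lj jS) /=.
case l0: (exit_time s v) => [|l]; first by rewrite !mul0n.
have lj' : l < j by rewrite -ltnS -l0.
by rewrite -pred_Sn take_takel ?nth_take // ltnW.
Qed.

Lemma potential_lb s v i : i <= size s -> v \in giant_after s i ->
  i.+1 * #|V|.+1 - #|V| <= potential s v.
Proof.
move=> iS; rewrite mem_giant_after // => il; rewrite /potential.
case: ifP => _; first by rewrite (leq_trans (leq_subr _ _)) // leq_mul2r ltnS iS orbT.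
by apply: leq_sub; rewrite ?leq_mul2r ?il ?orbT ?bfs_rank_le.
Qed.

Lemma potential_gt0 s v : v \in giant set0 -> 0 < potential s v.
Proof.
move=> v0; have := @potential_lb s v 0 (leq0n _).
by rewrite /giant_after take0 set_nil => /(_ v0); apply: leq_trans; rewrite mul1n subSnn.
Qed.

Lemma set_rcons s w : [set:: rcons s w] = w |: [set:: s].
Proof. by apply/setP=> x; rewrite !inE mem_rcons. Qed.

Lemma potential_exit s u l x0 : 0 < l <= size s -> u \in giant_after s l.-1 ->
  l.+1 * #|V|.+1 - #|V| <= potential s u \/
  potential s u = l * #|V|.+1 - bfs_rank [set:: take l.-1 s] (nth x0 s l.-1) u.
Proof.
case/andP=> l0 lS uprev; case: (boolP (u \in giant_after s l)) => ul.
  by left; apply: potential_lb.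
right; have exitE : exit_time s u = l.
  apply: exit_time_eq => // i il; apply: subsetP (giant_after_homo _ _) _ uprev.
  by rewrite -ltnS prednK.
by rewrite /potential exitE ltnNge lS /= (set_nth_default x0) // prednK.
Qed.

Lemma potential_nb_gt s a c : a \in giant set0 ->
  c \in giant_after s (size s) -> a \notin giant_after s (size s) ->
  exists2 b, e a b & potential s a < potential s b.
Proof.
move=> a0 cT aT; set l := exit_time s a.
have lS : l <= size s by move: aT; rewrite mem_giant_after // -leqNgt.
have l0 : 0 < l by rewrite -mem_giant_after // /giant_after take0 set_nil.
have l_S : 0 < l <= size s by rewrite l0.
set w := nth a s l.-1; set Q := [set:: take l.-1 s].
have QwE : [set:: take l s] = w |: Q.
  by rewrite -(prednK l0) (take_nth a) ?prednK // set_rcons.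
have aQ : a \in giant Q.
  by rewrite -/(giant_after s l.-1) mem_giant_after ?ltn_predL // (leq_trans (leq_pred l)).
have aQw : a \notin giant (w |: Q) by rewrite -QwE -/(giant_after s l) mem_giant_after ?ltnn.
have wQ : w \in giant Q by apply: contraT => wQ; move: aQw; rewrite giant_setU1.
have cQw : c \in giant (w |: Q).
  by rewrite -QwE; apply: subsetP (giant_after_homo _ lS) _ cT.
have potaE : potential s a = l * #|V|.+1 - bfs_rank Q w a.
  by rewrite /potential -/l ltnNge lS.
have [aw|naw] := eqVneq a w.
  have [u ewu uQw] := giant_setU1_nb e_sym wQ cQw.
  exists u; first by rewrite aw.
  have := potential_lb lS (_ : u \in giant_after s l); rewrite /giant_after QwE.
  by move=> /(_ uQw); rewrite potaE; nia.
have aw : a \in component e Q w by apply: giant_connected.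
move: (aw); rewrite -bfs_rank_gt0; case ra: (bfs_rank Q w a) => [//|[|r]] _.
  by rewrite (bfs_rank1 ra) eqxx in naw.
have [z eza /andP[z0 rz]] := bfs_rank_pred ra.
have zw : z \in component e Q w by rewrite -bfs_rank_gt0.
have zQ : z \in giant Q by apply: giant_component wQ zw.
exists z; first by rewrite e_sym.
have lM : #|V|.+1 <= l * #|V|.+1 by rewrite leq_pmull.
have := bfs_rank_le e Q w a; rewrite potaE ra.
by case: (potential_exit a l_S zQ) => [|->]; rewrite -/Q -/w ?mulSn; lia.
Qed.
End Potential.

Section Adversary.
Local Open Scope ring_scope.
Variables (V : finType) (e : rel V) (R : realFieldType) (A : algorithm V R).
Hypothesis e_sym : symmetric e.
Implicit Types (s S : seq V) (h : seq (V * R)).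

Fixpoint adversary_run t h s : seq V * option V :=
  match A h with
  | inr v => (s, Some v)
  | inl u => if t is t'.+1 then
       adversary_run t' (rcons h (u, (potential e (rcons s u) u)%:R)) (rcons s u)
     else (s, None)
  end.

Lemma adversary_runP t h s S o : adversary_run t h s = (S, o) ->
  [/\ s = take (size s) S, (size S <= size s + t)%N &
   forall f : V -> R, (forall i x0, (size s <= i < size S)%N ->
       f (nth x0 S i) = (potential e (take i.+1 S) (nth x0 S i))%:R) ->
     run A f t h = o].
Proof.
elim: t h s => [|t IH] h s /=; case Ah: (A h) => [u|v].
1,2,4: by case=> <- <-; rewrite take_size ?addn0 ?leq_addr; split=> // f _ /=; rewrite Ah.
case/IH=> sS szS runE; rewrite size_rcons addSnnS in sS szS.
have ltsS : (size s < size S)%N.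
  by have := congr1 size sS; rewrite size_rcons size_take_min; lia.
have {}sE : s = take (size s) S.
  by rewrite -(take_takel S (leqnSn (size s))) -sS -cats1 takel_cat // take_size.
have Su x0 : nth x0 S (size s) = u.
  by rewrite -(nth_take x0 (ltnSn (size s))) -sS nth_rcons ltnn eqxx.
split=> // f fS; have := fS (size s) u; rewrite leqnn ltsS Su -sS => /(_ isT) ->.
apply: runE => i x0; rewrite size_rcons => /andP[lt_i iS].
by apply: fS; rewrite iS (ltnW lt_i).
Qed.

Lemma run_adversary t : let: (s, o) := adversary_run t [::] [::] in
  (size s <= t)%N /\
  forall f : V -> R, {in s, forall v, f v = (potential e s v)%:R} -> run A f t [::] = o.
Proof.
case E: adversary_run => [S o]; have [_ szS runE] := adversary_runP E.
split=> // f fS; apply: runE => i x0 /andP[_ iS].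
have Si : nth x0 S i \in S by rewrite mem_nth.
rewrite fS // potential_take //; apply/negP => /giant_notin.
by rewrite inE (take_nth x0 iS) mem_rcons mem_head.
Qed.

Lemma adversary_defeats t :
  (forall v, v \in giant e set0) -> (forall a, exists2 b, b != a & e a b) ->
  (forall Q : {set V}, (#|Q| <= t)%N -> exists c, c \in giant e Q) ->
  ~ solves_within e A t.
Proof.
move=> giant0 has_nb giant_big solves.
have := run_adversary t; case: adversary_run => s [a|] [sz runE]; last first.
  by have [v] := solves (fun v => (potential e s v)%:R); rewrite runE.
have [c cs] : exists c, c \in giant_after e s (size s).
  by apply: giant_big; rewrite take_size (leq_trans _ sz) // cardsE card_size.
have [aC|aC] := boolP (a \in giant_after e s (size s)); last first.
  have [v] := solves (fun v => (potential e s v)%:R); rewrite runE // => -[<-].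
  have [b eab lt_ab] := potential_nb_gt e_sym (giant0 a) cs aC.
  by move/(_ b eab); rewrite ler_nat leqNgt lt_ab.
(* [a] was never queried, so its value can be lowered without affecting the run. *)
have a_s : a \notin s by have := giant_notin aC; rewrite take_size inE.
pose f v : R := if v == a then 0 else (potential e s v)%:R.
have [v] := solves f; rewrite runE => [[<-]|u us]; last first.
  by rewrite /f; case: eqP => // ua; move: a_s; rewrite -ua us.
have [b nba eab] := has_nb a; move/(_ b eab).
by rewrite /f eqxx (negbTE nba) lern0 eqn0Ngt potential_gt0.
Qed.
End Adversary.

Lemma perm_imset_eq (T : finType) (X Y : {set T}) : #|X| = #|Y| ->
  exists p : {perm T}, p @: X = Y.
Proof.
have [m] := ubnP #|X :\: Y|; elim: m X => // m IH X ltXm XY.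
have [XY0|/set0Pn[a]] := eqVneq (X :\: Y) set0.
  by exists 1%g; rewrite imset_perm1; apply/eqP; rewrite eqEcard -setD_eq0 XY0 eqxx XY leqnn.
rewrite inE => /andP[aY aX].
have /set0Pn[b] : Y :\: X != set0.
  rewrite -card_gt0 cardsD setIC -[#|Y|]XY -cardsD card_gt0.
  by apply/set0Pn; exists a; rewrite inE aY.
rewrite inE => /andP[bX bY].
have card_tX : #|tperm a b @: X| = #|Y| by rewrite card_imset //; apply: perm_inj.
have ltm : #|(tperm a b @: X) :\: Y| < m.
  rewrite -ltnS (leq_trans _ ltXm) // (cardsD1 a (X :\: Y)) !inE aY aX ltnS.
  apply: subset_leq_card; apply/subsetP=> _ /setDP[/imsetP[x xX ->] tY].
  move: tY; rewrite !inE; case: tpermP => [xa|xb|nxa nxb] tY.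
  - by rewrite bY in tY.
  - by move: bX; rewrite -xb xX.
  - by rewrite tY xX !andbT; apply/eqP.
have [p pX] := IH _ ltm card_tX.
by exists (tperm a b * p)%g; rewrite -pX -imset_comp; apply: eq_imset => x; rewrite permM.
Qed.

Section OddGraph.
Variable k : nat.
Local Notation n := (2 * k + 1).
Local Notation V := (kneser_vertex n k).
Local Notation e := (@kneser_adj n k).
Implicit Types (x y : V) (X : {set 'I_n}).

Lemma card_kvertex x : #|val x| = k.
Proof. exact/eqP/(valP x). Qed.

Lemma kneser_adj_sym : symmetric e.
Proof. by move=> x y; rewrite /kneser_adj disjoint_sym. Qed.

Definition kvertex X (kX : #|X| = k) : V := exist _ X (introT eqP kX).

Lemma card_setC_ord X : #|~: X| = n - #|X|.
Proof. by rewrite cardsCs setCK card_ord. Qed.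

Lemma kneser_adj2 x y : #|val x :|: val y| = k.+1 -> exists2 z, e x z & e z y.
Proof.
move=> xy; have kz : #|~: (val x :|: val y)| = k by rewrite card_setC_ord xy; lia.
exists (kvertex kz); rewrite /kneser_adj /=; last rewrite disjoint_sym.
  by rewrite disjoints_subset setCK subsetUl.
by rewrite disjoints_subset setCK subsetUr.
Qed.

Lemma kvertex_eq x y : val x \subset val y -> x = y.
Proof. by move=> sxy; apply/val_inj/eqP; rewrite eqEcard sxy !card_kvertex /=. Qed.

(* Two steps, through the complement of [b |: val x], exchange some
   [a \in val x :\: val y] for some [b \in val y :\: val x]. *)
Lemma kneser_path x y : exists p, [&& path e x p, last x p == y & size p <= 2 * k].
Proof.
suff [p /and3P[pxy lxy sz]] :
    exists p, [&& path e x p, last x p == y & size p <= 2 * #|val x :\: val y|].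
  exists p; rewrite pxy lxy (leq_trans sz) // leq_mul2l.
  by rewrite (leq_trans (subset_leq_card (subsetDl _ _))) ?card_kvertex ?orbT.
have [m] := ubnP #|val x :\: val y|; elim: m x => // m IH x ltxm.
have [xy0|/set0Pn[a]] := eqVneq (val x :\: val y) set0.
  exists [::]; rewrite /= leq0n andbT (kvertex_eq (_ : val x \subset val y)) //.
  by rewrite -setD_eq0 xy0.
rewrite inE => /andP[aY aX].
have /set0Pn[b] : val y :\: val x != set0.
  have Dyx : #|val y :\: val x| = #|val x :\: val y| by rewrite !cardsD setIC !card_kvertex.
  by rewrite -card_gt0 Dyx card_gt0; apply/set0Pn; exists a; rewrite inE aY.
rewrite inE => /andP[bX bY].
have kx' : #|b |: (val x :\ a)| = k.
  have := cardsD1 a (val x); rewrite aX card_kvertex cardsU1 !inE negb_and bX orbT.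
  by move/esym.
pose x' := kvertex kx'.
have [z xz zx'] : exists2 z, e x z & e z x'.
  apply: kneser_adj2; rewrite (_ : _ :|: _ = b |: val x) ?cardsU1 ?bX ?card_kvertex //.
  by apply/setP=> i; rewrite !inE; case: (i \in val x); rewrite ?orbT ?andbF ?orbF.
have dec : #|val x' :\: val y| < #|val x :\: val y|.
  rewrite (cardsD1 a (val x :\: val y)) !inE aY aX ltnS.
  apply: subset_leq_card; apply/subsetP=> i; rewrite !inE.
  by case/andP=> iY /orP[/eqP ib|/andP[-> ->]]; rewrite ?iY //; rewrite ib bY in iY.
have [p /and3P[px'p lx'p sz]] := IH x' (leq_trans dec ltxm).
exists [:: z, x' & p]; rewrite /= xz zx' px'p lx'p /=.
rewrite -[(size p).+2]addn2 (leq_trans (leq_add sz (leqnn 2))) //.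
by rewrite -mulnSr leq_mul2l dec orbT.
Qed.

Lemma kneser_nb x : 0 < k -> exists2 y, y != x & e x y.
Proof.
move=> k_gt0; have /set0Pn[i ix] : ~: val x != set0.
  by rewrite -card_gt0 card_setC_ord card_kvertex; lia.
have ky : #|~: val x :\ i| = k.
  by have := cardsD1 i (~: val x); rewrite ix card_setC_ord card_kvertex; lia.
have exy : e x (kvertex ky).
  by rewrite /kneser_adj /= disjoint_sym disjoints_subset subsetDl.
exists (kvertex ky) => //; apply: contraTneq exy => ->.
by rewrite /kneser_adj -setI_eq0 setIid -card_gt0 card_kvertex.
Qed.

Lemma kneser_giant0 x : x \in giant e set0.
Proof.
have compT : component e set0 x = setT.
  apply/setP=> y; rewrite inE; have [p /and3P[pxy /eqP <- _]] := kneser_path x y.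
  by apply: component_path => //; apply/allP=> z _; rewrite !inE.
have V0 : 0 < #|V| by apply/card_gt0P; exists x.
by rewrite inE inE compT cardsT; lia.
Qed.

Local Notation P := {perm 'I_n}.
Implicit Types (p q : P) (Q : {set V}).

Lemma card_kact p x : #|p @: val x| = k.
Proof. by rewrite card_imset ?card_kvertex //; apply: perm_inj. Qed.

Definition kact p x : V := kvertex (card_kact p x).

Lemma kact_adj p x y : e (kact p x) (kact p y) = e x y.
Proof.
rewrite /kneser_adj /= -!setI_eq0 -imsetI ?imset_eq0 //.
by move=> i j _ _; apply: perm_inj.
Qed.

Lemma kact_inj p : injective (kact p).
Proof. by move=> x y /(congr1 val) /imset_inj xy; apply/val_inj/xy/perm_inj. Qed.

Lemma kactM p q x : kact (p * q) x = kact q (kact p x).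
Proof. by apply: val_inj; rewrite /= -imset_comp; apply: eq_imset => i; rewrite permM. Qed.

Lemma kact_transitive x y : exists p, kact p x = y.
Proof.
have [p pxy] := perm_imset_eq (etrans (card_kvertex x) (esym (card_kvertex y))).
by exists p; apply: val_inj.
Qed.

Lemma kact_path p x s : path e (kact p x) (map (kact p) s) = path e x s.
Proof. by elim: s x => //= y s IH x; rewrite kact_adj IH. Qed.

Definition hits Q x := \sum_p (kact p x \in Q).

Lemma hits_const Q x y : hits Q y = hits Q x.
Proof.
have [q qxy] := kact_transitive x y.
rewrite /hits [RHS](reindex_inj (mulgI q)) /=; apply: eq_bigr => p _.
by rewrite kactM qxy.
Qed.

Lemma card_V_hits Q x : #|V| * hits Q x = #|P| * #|Q|.
Proof.
transitivity (\sum_y hits Q y).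
  by rewrite -sum_nat_const; apply: eq_bigr => y _; rewrite (hits_const Q x y).
rewrite /hits exchange_big /= -sum_nat_const; apply: eq_bigr => p _.
by rewrite -[RHS]sum_mem_card [RHS](reindex_inj (@kact_inj p)).
Qed.

Lemma sum_count_kact Q s x :
  \sum_p count (fun v => kact p v \in Q) s = size s * hits Q x.
Proof.
elim: s => [|y s IH] /=; first by rewrite big1.
by rewrite big_split /= IH (mulSn (size s)) -/(hits Q y) (hits_const Q x y).
Qed.

Definition kpath x y := xchoose (kneser_path x y).

Lemma kpathP x y :
  [/\ path e x (kpath x y), last x (kpath x y) = y & size (kpath x y) <= 2 * k].
Proof. by have /and3P[? /eqP ? ?] := xchooseP (kneser_path x y). Qed.

Lemma separated_kact_le Q p x y :
  separated e Q (kact p x) (kact p y) <= count (fun v => kact p v \in Q) (x :: kpath x y).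
Proof.
have [meet|avoid] := boolP (has (fun v => kact p v \in Q) (x :: kpath x y)).
  by move: meet; rewrite has_count; case: separated.
have [pxy lxy _] := kpathP x y.
suff : kact p y \in component e Q (kact p x) by rewrite /separated => ->; rewrite !andbF.
rewrite -lxy -last_map; apply: component_path; first by rewrite kact_path.
rewrite -map_cons all_map; apply/allP=> v vxy.
by apply: contra avoid => vQ; apply/hasP; exists v.
Qed.

Lemma separated_pairs_kact Q p :
  separated_pairs e Q = \sum_x \sum_y separated e Q (kact p x) (kact p y).
Proof.
rewrite /separated_pairs (reindex_inj (@kact_inj p)); apply: eq_bigr => x _.
by rewrite (reindex_inj (@kact_inj p)).
Qed.

(* Averaging over all relabellings [p]: the pair [(kact p x, kact p y)] is
   separated only if the relabelled canonical path meets [Q], and each vertex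
   is sent into [Q] by the same number of relabellings. *)
Lemma separated_pairs_ub Q : separated_pairs e Q <= #|V| * (2 * k + 1) * #|Q|.
Proof.
have P_gt0 : 0 < #|P| by apply/card_gt0P; exists 1%g.
rewrite -(leq_pmul2l P_gt0) -sum_nat_const.
apply: (@leq_trans (\sum_p \sum_x \sum_y count (fun v => kact p v \in Q) (x :: kpath x y))).
  apply: leq_sum => p _; rewrite (separated_pairs_kact Q p).
  by apply: leq_sum => x _; apply: leq_sum => y _; apply: separated_kact_le.
rewrite exchange_big /=.
apply: (@leq_trans (\sum_x \sum_(y : V) (2 * k + 1) * hits Q x)).
  apply: leq_sum => x _; rewrite exchange_big; apply: leq_sum => y _.
  have := sum_count_kact Q (x :: kpath x y) x; rewrite /= => ->.
  rewrite leq_mul2r; apply/orP; right.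
  by have [_ _ sz] := kpathP x y; rewrite -[_.+1]addn1 leq_add2r.
rewrite (eq_bigr (fun _ => (2 * k + 1) * (#|P| * #|Q|))) => [|x _]; last first.
  by rewrite sum_nat_const cardT -cardE mulnCA card_V_hits.
by rewrite sum_nat_const cardT -cardE mulnA mulnCA.
Qed.

Lemma kneser_giant t Q : 0 < k -> 16 * k * t < #|V| -> #|Q| <= t ->
  exists c, c \in giant e Q.
Proof.
move=> k_gt0 small Qt.
have [/separated_pairs_lb lb|/set0Pn//] := eqVneq (giant e Q) set0.
have ub := separated_pairs_ub Q.
have kq : 16 * k * #|Q| < #|V| by apply: leq_ltn_trans small; rewrite leq_mul2l Qt orbT.
have q16 : 16 * #|Q| < #|V| by apply: leq_ltn_trans kq; rewrite leq_mul2r leq_pmulr ?orbT.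
by move: lb ub kq q16; move: #|V| #|Q| (separated_pairs e Q) => N q m; nia.
Qed.

Lemma card_kneser_vertex : #|V| = 'C(n, k).
Proof.
rewrite card_sig -[n in 'C(n, _)](card_ord n) -card_draws.
by apply: eq_card => A; rewrite !inE.
Qed.
End OddGraph.

Local Open Scope ring_scope.

Theorem theorem3p5 (R : realFieldType) :
  exists2 c : rat, 0 < c &
  exists K : nat, forall k : nat, (K <= k)%N ->
    D_LS_ge (@kneser_adj (2 * k + 1) k) R
      (c * ('C(2 * k + 1, k)%:R / k%:R)).
Proof.
exists 16%:R^-1; first by rewrite invr_gt0 ltr0n.
exists 1%N => k k_gt0 A t solves.
have -> : 16%:R^-1 * ('C(2 * k + 1, k)%:R / k%:R) = 'C(2 * k + 1, k)%:R / (16 * k)%:R :> rat.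
  by rewrite natrM invfM mulrCA mulrA.
rewrite ler_pdivrMr ?ltr0n ?muln_gt0 // -natrM ler_nat leqNgt; apply/negP => small.
apply: adversary_defeats solves.
- exact: kneser_adj_sym.
- exact: kneser_giant0.
- by move=> x; apply: kneser_nb.
- by move=> Q; apply: kneser_giant; rewrite // card_kneser_vertex mulnC.
Qed.
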